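(* Let $N\ge 4$ and let $l,r$ be positive integers with $2\le l+r\le N-2$. Let $\hat O\in V_{\mathcal N}$ be $(l,r)$-invertible. Let $\hat X_i\in V_{\{i\}}$ for $i=1,\dots,N$ be arbitrary. Define operators $\hat Y_k\in V_{\{k+1,\dots,k+r\}}$, $k=N-r,N-r-1,\dots,l$, recursively by $\hat Y_{N-r}=\hat X_{N-r+1}\cdots\hat X_N$ and $$\hat Y_{k-1}=\bar E_{\{k-l,\dots,k-1\}}^{\{k,\dots,k+r-1\}}\Bigl(E_{\{k-l,\dots,k-1\}}^{\{k,\dots,k+r\}}(\hat X_k\hat Y_k)\Bigr),\qquad k=N-r,N-r-1,\dots,l+1,$$ where $\bar E$ denotes the Moore–Penrose pseudoinverse of the linear map $E$. Then $$\mathrm{tr}\bigl[\hat X_1\cdots\hat X_N\,\hat O\bigr]=\mathrm{tr}\bigl[\hat X_1\cdots\hat X_l\,\hat Y_l\,\hat O\bigr].$$ In particular (taking the $\hat X_i$ to run over basis operators $\hat P_i^{(\alpha_i)}$), an $(l,r)$-invertible $\hat O$ is completely determined by its reductions $\mathrm{tr}_{\mathcal N\setminus\{k,\dots,k+R-1\}}[\hat O]$, $k=1,\dots,N-R+1$, to all blocks of $R=l+r+1$ contiguous sites.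
   Context: Consider $N$ sites $\mathcal N=\{1,\dots,N\}$, each carrying $\mathbb C^d$; the total Hilbert space is $(\mathbb C^d)^{\otimes N}$. For each site $i$ let $\{\hat P_i^{(\alpha)}\}_{\alpha=1,\dots,d^2}$ be a basis of the operators on site $i$, orthonormal with respect to the Hilbert–Schmidt inner product $\langle A,B\rangle=\mathrm{tr}[A^\dagger B]$. For $\mathcal I\subset\mathcal N$, $V_{\mathcal I}$ is the complex vector space spanned by the products $\prod_{i\in\mathcal I}\hat P_i^{(\alpha_i)}$ (i.e. the operators acting on the sites in $\mathcal I$), equipped with the Hilbert–Schmidt inner product; an operator in $V_{\mathcal I}$ is identified with its tensor product with the identity on the remaining sites, and products of operators on disjoint site sets are tensor products. $\mathrm{tr}_{\mathcal S}$ denotes the partial trace over the sites in $\mathcal S$. For fixed $\hat O\in V_{\mathcal N}$ and $\mathcal I,\mathcal J\subset\mathcal N$ (with $\mathcal I\cup\mathcal J$ a contiguous set of sites and $\mathcal I\cap\mathcal J=\emptyset$), the linear map $E_{\mathcal I}^{\mathcal J}:V_{\mathcal J}\to V_{\mathcal I}$ is $E_{\mathcal I}^{\mathcal J}(\hat X)=\mathrm{tr}_{\mathcal N\setminus\mathcal I}[\hat X\hat O]$; equivalently $E_{\mathcal I}^{\mathcal J}(\hat X)=\mathrm{tr}_{\mathcal J}[\hat X\hat O_{\mathcal I\cup\mathcal J}]$ with $\hat O_{\mathcal I\cup\mathcal J}=\mathrm{tr}_{\mathcal N\setminus(\mathcal I\cup\mathcal J)}[\hat O]$. Definition ($(l,r)$-invertibility):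 for positive integers $l,r$ with $2\le l+r\le N-2$, $\hat O$ is called $(l,r)$-invertible if for every integer $k$ with $l\le k\le N-r-1$, $$\mathrm{rank}\bigl[E_{\{k-l+1,\dots,k\}}^{\{k+1,\dots,k+r\}}\bigr]=\mathrm{rank}\bigl[E_{\{1,\dots,k\}}^{\{k+1,\dots,N\}}\bigr].$$ *)

From HB Require Import structures.
From mathcomp Require Import all_boot all_order all_algebra.
Set Implicit Arguments. Unset Strict Implicit. Unset Printing Implicit Defensive.
Import Order.TTheory GRing.Theory Num.Theory.
Local Open Scope ring_scope.

(* Sites are numbered 1..N (as in the paper); the ordinal j : 'I_N encodes site j+1.
   A configuration assigns a basis state in 'I_d to each site.
   Operators on (C^d)^{(x)N} are square matrices indexed by configurations
   (via the canonical enumeration of the finite type of configurations). *)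
Section Defs.
Variables (C : numClosedFieldType) (N d : nat).

Definition cfg := {ffun 'I_N -> 'I_d}.
Definition dimH := #|{: cfg}|.
Definition op := 'M[C]_dimH.

Definition pairs : seq (cfg * cfg) := enum (predT : pred (cfg * cfg)%type).

Definition ent (A : op) (s t : cfg) : C := A (enum_rank s) (enum_rank t).
Definition mkop (f : cfg -> cfg -> C) : op :=
  \matrix_(i, j) f (enum_val i) (enum_val j).

Definition intv (a b : nat) : pred 'I_N := fun j => (a <= j.+1 <= b)%N.

Definition agree (P : pred 'I_N) (s t : cfg) : bool :=
  [forall j, P j ==> (s j == t j)].

(* matrix unit |s_I><t_I| on the sites I, tensored with the identity elsewhere *)
Definition eunit (I : pred 'I_N) (s t : cfg) : op :=
  mkop (fun u v => ((agree I u s && agree I v t) && agree (predC I) u v)%:R).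

(* V_I : operators acting on the sites I (identified with their tensor
   product with the identity on the remaining sites) *)
Definition Vsp (I : pred 'I_N) : {vspace op} :=
  <<[seq eunit I p.1 p.2 | p <- pairs]>>%VS.

(* partial trace over the sites S, the result (an operator on the complement)
   being identified with its tensor product with the identity on S *)
Definition ptr (S : pred 'I_N) (A : op) : op :=
  mkop (fun s t => (agree S s t)%:R *
     \sum_(u : cfg | agree (predC S) u s)
        ent A u [ffun j => if S j then u j else t j]).

Definition hs (A B : op) : C := \sum_i \sum_j (A i j)^* * B i j.

(* E_I^J (X) = tr_{N \ I}[X O]; the source set J only restricts the domain *)
Definition Emap (O : op) (I : pred 'I_N) (X : op) : op := ptr (predC I) (X *m O).

Definition rankE (O : op) (I J : pred 'I_N) : nat :=
  \dim <<[seq Emap O I (eunit J p.1 p.2) | p <- pairs]>>%VS.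

Definition lr_invertible (O : op) (l r : nat) : Prop :=
  forall k : nat, (l <= k <= N - r - 1)%N ->
    rankE O (intv (k - l + 1) k) (intv k.+1 (k + r)) =
    rankE O (intv 1 k) (intv k.+1 N).

(* F is the Moore--Penrose pseudoinverse of E_I^J : V_J -> V_I
   (Penrose conditions w.r.t. the Hilbert--Schmidt inner products; F is only
   constrained on V_I, which is its domain). *)
Definition is_pinv (O : op) (I J : pred 'I_N) (F : op -> op) : Prop :=
  [/\ forall Y, Y \in Vsp I -> F Y \in Vsp J &
      forall (a : C) Y Y', Y \in Vsp I -> Y' \in Vsp I ->
        F (a *: Y + Y') = a *: F Y + F Y'] /\
  [/\ forall X, X \in Vsp J -> Emap O I (F (Emap O I X)) = Emap O I X,
      forall Y, Y \in Vsp I -> F (Emap O I (F Y)) = F Y,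
      forall Y Y', Y \in Vsp I -> Y' \in Vsp I ->
        hs (Emap O I (F Y)) Y' = hs Y (Emap O I (F Y'))
    & forall X X', X \in Vsp J -> X' \in Vsp J ->
        hs (F (Emap O I X)) X' = hs X (F (Emap O I X'))].

End Defs.

Arguments intv N a b : clear implicits.
Arguments Vsp C N d I : clear implicits.

(* Write E_I(X) = tr_{N\I}[X O].  If E_I^J has the same rank as a coarser E_{I'}^W
      (I <= I', J <= W), then any generalized inverse F of E_I^J (only the
      Penrose condition E F E = E is used) satisfies E_{I'}(F(E_I Z)) =
      E_{I'}(Z) on V_W ([ginv_lift]).
   3. Sweep.  With I = {k-l..k-1}, I' = {1..k-1}, J = {k..k+r-1}, W = {k..N},
      (l,r)-invertibility is exactly that rank equality, so replacing X_k Y_k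
      by Y_{k-1} preserves tr[X_1...X_{k-1} (-) O]; iterating from k = N-r
      down to l+1 gives the trace identity ([sweep_trace]).
   4. Uniqueness.  Running the sweep on one-site matrix units, with generalized
      inverses built from O, for both O and O' (whose maps E agree on the
      windows used, since the blocks agree) recovers every matrix element of
      O' from that of O ([blocks_determine]). *)

From HB Require Import structures.
From mathcomp Require Import all_boot all_order all_algebra.
From mathcomp Require Import zify.
Import Order.TTheory GRing.Theory Num.Theory.
Local Open Scope ring_scope.
Set Implicit Arguments. Unset Strict Implicit. Unset Printing Implicit Defensive.

(* Then dim g(U) <= dim g(W) <= dim G(W); if
   the extremes agree, g(U) = g(W) and g, G have the same kernel on W, i.e.
   every g-value on W is reached from U, and g-fibers in W are G-fibers. *)
Lemma rank_squeeze (K : fieldType) (vT : vectType K) (g G : 'Hom(vT, vT))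
    (U W : {vspace vT}) :
  (U <= W)%VS -> (forall X, X \in W -> G X = 0 -> g X = 0) ->
  \dim (g @: U) = \dim (G @: W) ->
  (forall Z, Z \in W -> exists2 Z0, Z0 \in U & g Z0 = g Z) /\
  (forall Y Z, Y \in W -> Z \in W -> g Y = g Z -> G Y = G Z).
Proof.
move=> sUW kerGg dimUW.
have kerS : (W :&: lker G <= W :&: lker g)%VS.
  apply/subvP => X /memv_capP [XW]; rewrite !memv_ker => /eqP GX.
  by apply/memv_capP; split; rewrite // memv_ker kerGg.
have := limg_ker_dim G W; have := limg_ker_dim g W.
have := dimvS (limgS g sUW); have := dimvS kerS => dker dimg rkg rkG.
have img_eq : (g @: U)%VS = (g @: W)%VS.
  by apply/eqP; rewrite eqEdim limgS //=; lia.
have ker_eq : (W :&: lker G)%VS = (W :&: lker g)%VS.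
  by apply/eqP; rewrite eqEdim kerS /=; lia.
split=> [Z ZW | Y Z YW ZW gYZ].
  have : g Z \in (g @: U)%VS by rewrite img_eq memv_img.
  by case/memv_imgP => Z0 Z0U ->; exists Z0.
have : Y - Z \in (W :&: lker G)%VS.
  by rewrite ker_eq memv_cap memvB // memv_ker linearB /= gYZ subrr.
by rewrite memv_cap memv_ker linearB /= subr_eq0 => /andP [_ /eqP].
Qed.

Section Operators.
Variables (C : numClosedFieldType) (N d : nat).
Local Notation cfg := (cfg N d).
Local Notation op := (op C N d).
Local Notation V := (Vsp C N d).
Local Notation eu := (eunit C).
Implicit Types (A B M Q : op) (s t u v w : cfg) (I J K : pred 'I_N).

Lemma entE f s t : ent (mkop f : op) s t = f s t.
Proof. by rewrite /ent /mkop mxE !enum_rankK. Qed.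

Lemma opP A B : (forall s t, ent A s t = ent B s t) -> A = B.
Proof.
move=> eqAB; apply/matrixP => i j.
by have := eqAB (enum_val i) (enum_val j); rewrite /ent !enum_valK.
Qed.

Lemma sum_cfg (F : 'I_(dimH N d) -> C) : \sum_i F i = \sum_s F (enum_rank s).
Proof.
rewrite (reindex (@enum_rank _)) //=.
by exists (@enum_val _ _) => x _; [exact: enum_rankK | exact: enum_valK].
Qed.

Lemma ent_mul A B s t : ent (A * B) s t = \sum_w ent A s w * ent B w t.
Proof. by rewrite /ent mxE sum_cfg. Qed.

Lemma ent1 s t : ent (1 : op) s t = (s == t)%:R.
Proof. by rewrite /ent mxE (inj_eq enum_rank_inj). Qed.

Lemma entD A B s t : ent (A + B) s t = ent A s t + ent B s t.
Proof. by rewrite /ent mxE. Qed.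

Lemma entZ a A s t : ent (a *: A) s t = a * ent A s t.
Proof. by rewrite /ent mxE. Qed.

Lemma ent0 s t : ent (0 : op) s t = 0.
Proof. by rewrite /ent mxE. Qed.

Lemma ent_sum (T : Type) (r : seq T) (P : pred T) (F : T -> op) s t :
  ent (\sum_(i <- r | P i) F i) s t = \sum_(i <- r | P i) ent (F i) s t.
Proof. by rewrite /ent summxE. Qed.

Lemma tr_ent A : \tr A = \sum_s ent A s s.
Proof. by rewrite /mxtrace sum_cfg. Qed.

Lemma agreeP I s t : reflect (forall j, I j -> s j = t j) (agree I s t).
Proof.
apply: (iffP forallP) => st j; first by move=> Ij; move: (st j); rewrite Ij => /eqP.
by apply/implyP => /st ->.
Qed.

Lemma agree_refl I s : agree I s s.
Proof. by apply/agreeP. Qed.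

Lemma agree_sym I s t : agree I s t = agree I t s.
Proof. by apply/agreeP/agreeP => H j Ij; rewrite H. Qed.

Lemma agree_trans I s t u : agree I s t -> agree I t u -> agree I s u.
Proof. by move=> /agreeP st /agreeP tu; apply/agreeP => j Ij; rewrite st // tu. Qed.

Lemma agree_eqr I s t u : agree I s t -> agree I s u = agree I t u.
Proof.
move=> st; apply/idP/idP => [su | tu]; last exact: agree_trans st tu.
by apply: agree_trans su; rewrite agree_sym.
Qed.

Lemma agree_sub I J s t : {subset J <= I} -> agree I s t -> agree J s t.
Proof. by move=> sJI /agreeP st; apply/agreeP => j /sJI; apply: st. Qed.

Lemma agree_ext I J : I =1 J -> forall s t, agree I s t = agree J s t.
Proof. by move=> eqIJ s t; apply: eq_forallb => j; rewrite eqIJ. Qed.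

Lemma agreeCC I s t : agree (predC (predC I)) s t = agree I s t.
Proof. by apply: eq_forallb => j; rewrite /= negbK. Qed.

Lemma agree_split I s t : agree I s t -> agree (predC I) s t -> s = t.
Proof.
move=> /agreeP sI /agreeP sC; apply/ffunP => j.
by case Ij: (I j); [apply: sI | apply: sC; rewrite /= Ij].
Qed.

Definition mix K (a y : cfg) : cfg := [ffun j => if K j then a j else y j].

Lemma agree_mix K a y : agree K (mix K a y) a.
Proof. by apply/agreeP => j Kj; rewrite ffunE Kj. Qed.

Lemma agreeC_mix K a y : agree (predC K) (mix K a y) y.
Proof. by apply/agreeP => j /= Kj; rewrite ffunE (negbTE Kj). Qed.

Definition local I A : Prop :=
  (forall u v, ~~ agree (predC I) u v -> ent A u v = 0) /\
  (forall u v u' v', agree I u u' -> agree I v v' -> agree (predC I) u v ->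
      agree (predC I) u' v' -> ent A u v = ent A u' v').

Lemma ent_eunit I s t u v : ent (eu I s t) u v =
  ((agree I u s && agree I v t) && agree (predC I) u v)%:R.
Proof. by rewrite /eunit entE. Qed.

Lemma local_eunit I s t : local I (eu I s t).
Proof.
split=> [u v nuv | u v u' v' uu' vv' uv u'v']; rewrite !ent_eunit.
  by rewrite (negbTE nuv) andbF.
by rewrite uv u'v' (agree_eqr _ uu') (agree_eqr _ vv').
Qed.

Lemma local0 I : local I 0.
Proof. by split=> *; rewrite !ent0. Qed.

Lemma localD I a A B : local I A -> local I B -> local I (a *: A + B).
Proof.
move=> [A0 Aeq] [B0 Beq]; split=> [u v nuv | u v u' v' *]; rewrite !entD !entZ.
  by rewrite A0 // B0 // mulr0 addr0.
by rewrite (Aeq u v u' v') // (Beq u v u' v').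
Qed.

Lemma eunit_Vsp I s t : eu I s t \in V I.
Proof. by apply: memv_span; apply/mapP; exists (s, t); rewrite // /pairs mem_enum. Qed.

Lemma Vsp_ind K (P : op -> Prop) : P 0 ->
  (forall a A B, P A -> P B -> P (a *: A + B)) -> (forall s t, P (eu K s t)) ->
  forall A, A \in V K -> P A.
Proof.
move=> P0 PD Pe A AK.
rewrite (@coord_span _ _ _ (in_tuple [seq eu K p.1 p.2 | p <- pairs N d]) A AK).
apply: (big_ind P P0).
  by move=> A1 A2 PA1 PA2; have := PD 1 _ _ PA1 PA2; rewrite scale1r.
move=> i _; rewrite -[_ *: _]addr0; apply: PD P0.
by have /mapP [p _ ->] := mem_nth 0 (ltn_ord i).
Qed.

(* Conversely, a local operator is the combination of the matrix units on I
   weighted by its matrix elements between canonical configurations (those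
   equal to a fixed s0 off I). *)
Lemma VspP I A : A \in V I <-> local I A.
Proof.
split; first by apply: Vsp_ind; [exact: local0 | exact: localD | exact: local_eunit].
move=> [A0 Aeq]; case: (pickP (@predT cfg)) => [s0 _ | no_cfg]; last first.
  by rewrite (_ : A = 0) ?mem0v //; apply: opP => s; have := no_cfg s.
pose canon x := mix I x s0.
have canon_agree x : agree I x (canon x) by rewrite agree_sym agree_mix.
have canonK x : canon (canon x) = canon x.
  by apply/ffunP => j; rewrite !ffunE; case: (I j).
pose c (p : cfg * cfg) :=
  ((p.1 == canon p.1) && (p.2 == canon p.2))%:R * ent A p.1 p.2.
suff -> : A = \sum_(p <- pairs N d) c p *: eu I p.1 p.2.
  by apply: memv_suml => p _; rewrite memvZ ?eunit_Vsp.
apply: opP => u v; rewrite ent_sum /pairs big_enum /= (bigD1 (canon u, canon v)) //=.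
rewrite big1 ?addr0 => [|[p1 p2] /= neq_p].
  rewrite entZ ent_eunit /c /= !canonK !eqxx !canon_agree mul1r /=.
  case uv: (agree (predC I) u v); last by rewrite mulr0 A0 // uv.
  rewrite mulr1; apply: Aeq => //; apply/agreeP => j /= Ij.
  by rewrite !ffunE (negbTE Ij).
rewrite entZ ent_eunit /c /=.
case: (p1 =P canon p1) => [p1E|]; rewrite ?mul0r //=.
case: (p2 =P canon p2) => [p2E|]; rewrite ?mul0r //=.
case up1: (agree I u p1); case vp2: (agree I v p2); rewrite /= ?mulr0 //.
case/negP: neq_p; apply/eqP; congr pair.
  by rewrite p1E; apply/ffunP => j; rewrite !ffunE; case: ifP => // /(agreeP _ _ _ up1).
by rewrite p2E; apply/ffunP => j; rewrite !ffunE; case: ifP => // /(agreeP _ _ _ vp2).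
Qed.

(* For A acting on I and B on a disjoint J, the matrix product A B has a
   single nonzero term: the intermediate configuration is forced. *)
Lemma ent_mul_disjoint I J A B u v : (forall j, I j -> ~~ J j) ->
  local I A -> local J B -> ent (A * B) u v = ent A u (mix I v u) * ent B (mix I v u) v.
Proof.
move=> dIJ [A0 _] [B0 _]; rewrite ent_mul (bigD1 (mix I v u)) //= big1 ?addr0 // => w neq_w.
case uw: (agree (predC I) u w); last by rewrite A0 ?mul0r // uw.
case wv: (agree (predC J) w v); last by rewrite (B0 w v) ?mulr0 // wv.
case/negP: neq_w; apply/eqP/ffunP => j; rewrite ffunE; case: ifP => Ij.
  by apply: (agreeP _ _ _ wv); rewrite /= dIJ.
by apply/esym/(agreeP _ _ _ uw); rewrite /= Ij.
Qed.

Lemma local_mul I J A B : (forall j, I j -> ~~ J j) ->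
  local I A -> local J B -> local (predU I J) (A * B).
Proof.
move=> dIJ lA lB; have [_ Aeq] := lA; have [B0 Beq] := lB.
split=> [u v nuv | u v u' v' uu' vv' uv u'v']; rewrite !(ent_mul_disjoint _ _ dIJ lA lB).
  rewrite (B0 _ v) ?mulr0 //; apply: contra nuv => /agreeP wv; apply/agreeP => j /=.
  by rewrite negb_or => /andP [nI nJ]; have := wv j nJ; rewrite ffunE (negbTE nI).
move: uu' vv' uv u'v' => /agreeP uu' /agreeP vv' /agreeP uv /agreeP u'v'.
congr (_ * _); [apply: Aeq | apply: Beq]; apply/agreeP => j /=; rewrite ?ffunE.
- by move=> Ij; apply: uu'; rewrite /= Ij.
- by move=> Ij; rewrite Ij; apply: vv'; rewrite /= Ij.
- by move/negbTE ->.
- by move/negbTE ->.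
- by move=> Jj; case: (I j); [apply: vv' | apply: uu']; rewrite /= Jj orbT.
- by move=> Jj; apply: vv'; rewrite /= Jj orbT.
- by move=> nJ; case: ifP => // Ij; apply: uv; rewrite /= Ij (negbTE nJ).
- by move=> nJ; case: ifP => // Ij; apply: u'v'; rewrite /= Ij (negbTE nJ).
Qed.

Lemma local_sub I J A : {subset I <= J} -> local I A -> local J A.
Proof.
move=> sIJ [A0 Aeq]; have sCJI : {subset predC J <= predC I}.
  by move=> j; apply: contra; apply: sIJ.
split=> [u v nuv | u v u' v' uu' vv' uv u'v'].
  by apply: A0; apply: contra nuv; apply: agree_sub sCJI.
case uvI: (agree (predC I) u v); last first.
  rewrite A0 ?uvI // A0 //; apply: contraFN uvI => u'v'I.
  apply/agreeP => j /= nIj; case Jj: (J j); last by apply: (agreeP _ _ _ uv); rewrite /= Jj.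
  rewrite (agreeP _ _ _ uu' _ Jj) (agreeP _ _ _ vv' _ Jj).
  exact: (agreeP _ _ _ u'v'I).
apply: (Aeq u v u' v' (agree_sub sIJ uu') (agree_sub sIJ vv') uvI).
apply/agreeP => j /= nIj; case Jj: (J j); last by apply: (agreeP _ _ _ u'v'); rewrite /= Jj.
rewrite -(agreeP _ _ _ uu' _ Jj) -(agreeP _ _ _ vv' _ Jj).
exact: (agreeP _ _ _ uvI).
Qed.

Lemma Vsp_sub I J A : {subset I <= J} -> A \in V I -> A \in V J.
Proof. by move=> sIJ /VspP /(local_sub sIJ) /VspP. Qed.

Lemma Vsp_mul I J K A B : (forall j, I j -> ~~ J j) -> {subset predU I J <= K} ->
  A \in V I -> B \in V J -> A * B \in V K.
Proof.
move=> dIJ sK /VspP lA /VspP lB; apply/VspP.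
exact: local_sub sK (local_mul dIJ lA lB).
Qed.

Lemma Vsp1 I : (1 : op) \in V I.
Proof.
apply/VspP; split=> [u v nuv | u v u' v' uu' vv' uv u'v']; rewrite !ent1.
  by case: eqP => // uv; rewrite uv agree_refl in nuv.
have eq_agree (x y : cfg) : agree (predC I) x y -> (x == y) = agree I x y.
  move=> xyC; apply/eqP/idP => [-> | xyI]; first exact: agree_refl.
  exact: agree_split xyI xyC.
rewrite (eq_agree _ _ uv) (eq_agree _ _ u'v') (agree_eqr _ uu').
by rewrite agree_sym (agree_eqr _ vv') agree_sym.
Qed.

Lemma intv_sub a b c e : (c <= a)%N -> (b <= e)%N -> {subset intv N a b <= intv N c e}.
Proof. by rewrite /intv => ca be j /andP [aj jb]; apply/andP; split; lia. Qed.

Lemma intvU_sub a b a' b' c e : (c <= a)%N -> (b <= e)%N -> (c <= a')%N -> (b' <= e)%N ->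
  {subset predU (intv N a b) (intv N a' b') <= intv N c e}.
Proof.
rewrite /intv => ca be ca' b'e j /orP [] /andP [lo hi]; apply/andP; split; lia.
Qed.

Lemma intv_disj a b c e : (b < c)%N -> forall j, intv N a b j -> ~~ intv N c e j.
Proof. by rewrite /intv => bc j /andP [_ jb]; apply/negP => /andP [cj _]; lia. Qed.

Lemma prod_Vsp (X : nat -> op) a b :
  (forall i, (a <= i <= b)%N -> X i \in V (intv N i i)) ->
  \prod_(a <= i < b.+1) X i \in V (intv N a b).
Proof.
elim: b => [|b IHb] HX.
  case: a HX => [|a] HX; last by rewrite big_geq ?Vsp1.
  by rewrite big_nat1; apply: HX.
have [ab | ba] := leqP a b.+1; last by rewrite big_geq ?Vsp1 // ltnW.
rewrite big_nat_recr //=; apply: (@Vsp_mul (intv N a b) (intv N b.+1 b.+1)).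
- exact: intv_disj.
- by apply: intvU_sub; lia.
- by apply: IHb => i /andP [ai ib]; apply: HX; lia.
- by apply: HX; lia.
Qed.

Lemma ent_ptr S A s t : ent (ptr S A) s t = (agree S s t)%:R *
  \sum_(u | agree (predC S) u s) ent A u (mix S u t).
Proof. by rewrite /ptr entE. Qed.

Lemma tr_eunit_ptr K t s Q : \tr (eu K t s * Q) = ent (ptr (predC K) Q) s (mix K t s).
Proof.
rewrite ent_ptr agree_sym agreeC_mix mul1r.
have -> : \sum_(u | agree (predC (predC K)) u s) ent Q u (mix (predC K) u (mix K t s)) =
    \sum_(y | agree K y s) ent Q y (mix K t y).
  apply: eq_big => [u | u _]; first exact: agreeCC.
  by congr (ent Q u _); apply/ffunP => j; rewrite !ffunE /=; case: (K j).
rewrite tr_ent; under eq_bigr do rewrite ent_mul.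
rewrite exchange_big /= [RHS]big_mkcond /=; apply: eq_bigr => y _.
rewrite (bigD1 (mix K t y)) //= big1 ?addr0 => [|x neq_x].
  rewrite ent_eunit agree_mix agreeC_mix andbT /=.
  by case: (agree K y s); rewrite ?mul0r ?mul1r.
rewrite ent_eunit; case xt: (agree K x t); case xy: (agree (predC K) x y);
  rewrite ?andbF ?mul0r //=.
case/negP: neq_x; apply/eqP/(@agree_split K).
  by rewrite (agree_eqr _ xt) agree_sym agree_mix.
by rewrite (agree_eqr _ xy) agree_sym agreeC_mix.
Qed.

Lemma ptr_traceP K Q Q' : ptr (predC K) Q = ptr (predC K) Q' <->
  (forall M, M \in V K -> \tr (M * Q) = \tr (M * Q')).
Proof.
split=> [eqQ | eqtr].
  apply: Vsp_ind => [|a A B trA trB | s t]; first by rewrite !mul0r.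
    by rewrite !mulrDl !mxtraceD -!mulmxE -!scalemxAl !mxtraceZ !mulmxE trA trB.
  by rewrite !tr_eunit_ptr eqQ.
apply: opP => s t; case st: (agree (predC K) s t); last by rewrite !ent_ptr st !mul0r.
have -> : t = mix K t s.
  apply: (@agree_split K); rewrite agree_sym ?agree_mix //.
  exact: agree_trans (agreeC_mix K t s) st.
by rewrite -!tr_eunit_ptr eqtr ?eunit_Vsp.
Qed.

Lemma ptr_Vsp K Q : ptr (predC K) Q \in V K.
Proof.
apply/VspP; split=> [u v nuv | u v u' v' uu' vv' uv u'v']; rewrite !ent_ptr.
  by rewrite (negbTE nuv) mul0r.
rewrite uv u'v'; congr (_ * _); apply: eq_big => [y | y _].
  by rewrite !agreeCC ![agree K y _]agree_sym (agree_eqr _ uu').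
congr (ent Q y _); apply/ffunP => j; rewrite !ffunE /=.
by case Kj: (K j) => //=; apply: (agreeP _ _ _ vv').
Qed.

Lemma ptr_lin S a A B : ptr S (a *: A + B) = a *: ptr S A + ptr S B.
Proof.
apply: opP => s t; rewrite entD entZ !ent_ptr.
under eq_bigr do rewrite entD entZ.
by rewrite big_split /= -mulr_sumr mulrDr mulrCA.
Qed.

Lemma Emap_lin (O : op) I : linear (Emap O I).
Proof. by move=> a X Y; rewrite /Emap mulmxDl -scalemxAl ptr_lin. Qed.

HB.instance Definition _ (O : op) I :=
  GRing.isLinear.Build C op op *:%R (Emap O I) (Emap_lin O I).

Definition Ehom (O : op) I : 'Hom(op, op) := linfun (Emap O I).

Lemma EhomE O I X : Ehom O I X = Emap O I X.
Proof. exact: lfunE. Qed.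

Lemma Emap_Vsp O I X : Emap O I X \in V I.
Proof. exact: ptr_Vsp. Qed.

Lemma rankE_img O I J : rankE O I J = \dim (Ehom O I @: V J)%VS.
Proof.
rewrite /rankE /Vsp limg_span.
have -> : [seq Ehom O I X | X <- [seq eu J p.1 p.2 | p <- pairs N d]] =
    [seq Emap O I (eu J p.1 p.2) | p <- pairs N d].
  by rewrite -map_comp; apply: eq_map => p; rewrite /= EhomE.
by [].
Qed.

Lemma Emap_traceP O I A B : Emap O I A = Emap O I B <->
  (forall M, M \in V I -> \tr (M * A *m O) = \tr (M * B *m O)).
Proof.
by rewrite /Emap ptr_traceP; split=> eqtr M /eqtr; rewrite -!mulmxE !mulmxA.
Qed.

Lemma Emap_coarsen O I I' A B : {subset I <= I'} ->
  Emap O I' A = Emap O I' B -> Emap O I A = Emap O I B.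
Proof.
by move=> sII' /Emap_traceP eqtr; apply/Emap_traceP => M /(Vsp_sub sII'); apply: eqtr.
Qed.

Lemma Emap_block O O' K I J Z : ptr (predC K) O' = ptr (predC K) O ->
  (forall j, I j -> ~~ J j) -> {subset predU I J <= K} -> Z \in V J ->
  Emap O' I Z = Emap O I Z.
Proof.
move=> /ptr_traceP eqO dIJ sK ZJ; apply/ptr_traceP => M MI.
by rewrite -!mulmxE !mulmxA !mulmxE eqO // (Vsp_mul dIJ sK MI ZJ).
Qed.

Definition same_blocks (R : nat) (O O' : op) : Prop :=
  forall k, (1 <= k <= N - R + 1)%N ->
    ptr (predC (intv N k (k + R - 1))) O' = ptr (predC (intv N k (k + R - 1))) O.

Definition ginv (O : op) I J (F : op -> op) : Prop :=
  (forall Y, Y \in V I -> F Y \in V J) /\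
  (forall X, X \in V J -> Emap O I (F (Emap O I X)) = Emap O I X).

Lemma pinv_ginv O I J F : is_pinv O I J F -> ginv O I J F.
Proof. by case=> [[FV _] [EFE _ _ _]]. Qed.

Definition ginv_of O I J (Y : op) : op :=
  projv (V J) (((Ehom O I \o projv (V J))^-1)%VF Y).

Lemma ginv_ofP O I J : ginv O I J (ginv_of O I J).
Proof.
split=> [Y _ | X XJ]; first exact: memv_proj.
have EP_X : (Ehom O I \o projv (V J))%VF X = Emap O I X.
  by rewrite comp_lfunE projv_id ?EhomE.
have EP A : Ehom O I (projv (V J) A) = (Ehom O I \o projv (V J))%VF A.
  by rewrite comp_lfunE.
rewrite /ginv_of -EhomE EP -EP_X limg_lfunVK //.
exact: memv_img (memvf _).
Qed.

Lemma ginv_transfer O O' I J F :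
  (forall X, X \in V J -> Emap O' I X = Emap O I X) -> ginv O I J F -> ginv O' I J F.
Proof.
move=> eqE [FV EFE]; split=> // X XJ.
by rewrite !eqE ?EFE // FV // Emap_Vsp.
Qed.

Lemma ginv_lift O I I' J W F : {subset I <= I'} -> {subset J <= W} ->
  rankE O I J = rankE O I' W -> ginv O I J F ->
  forall Z, Z \in V W -> Emap O I' (F (Emap O I Z)) = Emap O I' Z.
Proof.
move=> sII' sJW rkE [FV EFE] Z ZW.
have sVJW : (V J <= V W)%VS by apply/subvP => A; apply: Vsp_sub.
have kerE A : A \in V W -> Ehom O I' A = 0 -> Ehom O I A = 0.
  rewrite !EhomE => _ EA; rewrite -(linear0 (Emap O I)).
  by apply: Emap_coarsen sII' _; rewrite EA linear0.
rewrite !rankE_img in rkE.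
have [img_eq fiber_eq] := rank_squeeze sVJW kerE rkE.
have [Z0 Z0J EZ0] := img_eq Z ZW; rewrite !EhomE in EZ0.
have FJ : F (Emap O I Z) \in V J by apply/FV/Emap_Vsp.
have := fiber_eq _ _ (subvP sVJW _ FJ) ZW; rewrite !EhomE; apply.
by rewrite -EZ0 EFE.
Qed.

Section Sweep.
Variables (O : op) (l r : nat) (X Y : nat -> op) (F : nat -> op -> op).
Local Notation P m := (\prod_(1 <= i < m.+1) X i).
Local Notation Ileft k := (intv N (k - l) (k - 1)).
Local Notation Jright k := (intv N k (k + r - 1)).

Hypothesis lr_le : (l + r <= N)%N.
Hypothesis X_site : forall i, (1 <= i <= N)%N -> X i \in V (intv N i i).
Hypothesis F_ginv :
  forall k, (l + 1 <= k <= N - r)%N -> ginv O (Ileft k) (Jright k) (F k).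
Hypothesis Y_top : Y (N - r) = \prod_((N - r).+1 <= i < N.+1) X i.
Hypothesis Y_rec : forall k, (l + 1 <= k <= N - r)%N ->
  Y (k - 1)%N = F k (Emap O (Ileft k) (X k * Y k)).

Lemma sweep_Vsp k : (l <= k <= N - r)%N -> Y k \in V (intv N k.+1 (k + r)).
Proof.
move=> klr; have [k_top | k_ne] := eqVneq k (N - r)%N.
  rewrite k_top Y_top (_ : (N - r + r = N)%N); last by lia.
  by apply: prod_Vsp => i ri; apply: X_site; lia.
have k1 : (l + 1 <= k.+1 <= N - r)%N by lia.
have [FV _] := F_ginv k1.
have := Y_rec k1; rewrite [in Y _]subSS subn0 => ->.
by rewrite (_ : (k + r = k.+1 + r - 1)%N); [apply: FV; exact: Emap_Vsp | lia].
Qed.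

Lemma sweep_XY_Vsp k : (l + 1 <= k <= N - r)%N -> X k * Y k \in V (intv N k (k + r)).
Proof.
move=> klr; apply: (@Vsp_mul (intv N k k) (intv N k.+1 (k + r))).
- exact: intv_disj.
- by apply: intvU_sub; lia.
- by apply: X_site; lia.
- by apply: sweep_Vsp; lia.
Qed.

Lemma sweep_transfer O' : same_blocks (l + r + 1) O O' ->
  (forall k, (l + 1 <= k <= N - r)%N -> ginv O' (Ileft k) (Jright k) (F k)) /\
  (forall k, (l + 1 <= k <= N - r)%N ->
     Y (k - 1)%N = F k (Emap O' (Ileft k) (X k * Y k))).
Proof.
move=> blocks.
have E_eq k Z : (l + 1 <= k <= N - r)%N -> Z \in V (intv N k (k + r)) ->
    Emap O' (Ileft k) Z = Emap O (Ileft k) Z.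
  move=> klr; apply: (Emap_block (blocks (k - l)%N _)); first lia.
  - by apply: intv_disj; lia.
  - by apply: intvU_sub; lia.
split=> k klr; last by rewrite E_eq ?Y_rec ?sweep_XY_Vsp.
apply: ginv_transfer (F_ginv klr) => Z ZJ.
by apply: E_eq klr (Vsp_sub _ ZJ); apply: intv_sub; lia.
Qed.

Hypothesis O_inv : lr_invertible O l r.

(* One step of the sweep: replacing X_k Y_k by Y_{k-1} does not change the
   trace against O, because both have the same image under E_{1..k-1}. *)
Lemma sweep_step k : (l + 1 <= k <= N - r)%N ->
  \tr (P k * Y k *m O) = \tr (P (k - 1) * Y (k - 1)%N *m O).
Proof.
move=> klr; have k1 : k = (k - 1).+1 by lia.
have P_split : P k = P (k - 1) * X k by rewrite [in LHS]k1 big_nat_recr //= -k1.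
have rk : rankE O (Ileft k) (Jright k) = rankE O (intv N 1 (k - 1)) (intv N k N).
  have := @O_inv (k - 1)%N; rewrite -k1 (_ : (k - 1 - l + 1 = k - l)%N); last by lia.
  by rewrite (_ : (k - 1 + r = k + r - 1)%N); [apply; lia | lia].
have E_glob : Emap O (intv N 1 (k - 1)) (Y (k - 1)%N) =
    Emap O (intv N 1 (k - 1)) (X k * Y k).
  rewrite Y_rec //; apply: (ginv_lift _ _ rk (F_ginv klr)).
  - by apply: intv_sub; lia.
  - by apply: intv_sub; lia.
  - by apply: Vsp_sub (sweep_XY_Vsp klr); apply: intv_sub; lia.
have /Emap_traceP E_tr := E_glob.
rewrite P_split -mulrA E_tr //.
by apply: prod_Vsp => i ik; apply: X_site; lia.
Qed.

Lemma sweep_trace : \tr (P N *m O) = \tr (P l * Y l *m O).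
Proof.
suff tr_m m : (m <= N - r - l)%N ->
    \tr (P N *m O) = \tr (P (N - r - m) * Y (N - r - m)%N *m O).
  by rewrite (tr_m (N - r - l)%N) // (_ : (N - r - (N - r - l) = l)%N); last lia.
elim: m => [_ | m IHm lt_m].
  by rewrite subn0 Y_top -(@big_cat_nat _ _ _ (N - r).+1) //; lia.
rewrite IHm ?(ltnW lt_m) // sweep_step; last by lia.
by rewrite (_ : (N - r - m - 1 = N - r - m.+1)%N); last lia.
Qed.

End Sweep.

Lemma eunit_mul I J (a b : cfg) : (forall j, I j -> ~~ J j) ->
  eu I a b * eu J a b = eu (predU I J) a b.
Proof.
move=> dIJ; apply: opP => u v.
rewrite (ent_mul_disjoint _ _ dIJ (local_eunit I a b) (local_eunit J a b)) !ent_eunit.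
have agreeU (x y : cfg) : agree (predU I J) x y = agree I x y && agree J x y.
  apply/agreeP/andP => [xy | [/agreeP xyI /agreeP xyJ] j /orP [/xyI | /xyJ] //].
  by split; apply/agreeP => j jIJ; apply: xy; rewrite /= jIJ ?orbT.
have -> : agree I (mix I v u) b = agree I v b.
  by apply: eq_forallb => j; rewrite ffunE; case: (I j).
have -> : agree J (mix I v u) a = agree J u a.
  apply: eq_forallb => j; rewrite ffunE; case Ij: (I j) => //.
  by rewrite (negbTE (dIJ j Ij)).
have -> : agree (predC J) (mix I v u) v = agree (predC (predU I J)) u v.
  by apply: eq_forallb => j; rewrite ffunE /=; case: (I j); case: (J j); rewrite //= eqxx.
rewrite [agree (predC I) u _]agree_sym agreeC_mix !agreeU.
by case: (agree I u a); case: (agree I v b); case: (agree J u a); case: (agree J v b);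
   case: (agree (predC (predU I J)) u v); rewrite /= ?mulr0 ?mul0r ?mulr1.
Qed.

Lemma eunit_ext I J (a b : cfg) : I =1 J -> eu I a b = eu J a b.
Proof.
move=> eqIJ; apply: opP => u v; rewrite !ent_eunit.
have eqC : predC I =1 predC J by move=> j /=; rewrite eqIJ.
by rewrite !(agree_ext eqIJ) (agree_ext eqC).
Qed.

Lemma prod_eunit (a b : cfg) m :
  \prod_(1 <= i < m.+1) eu (intv N i i) a b = eu (intv N 1 m) a b.
Proof.
elim: m => [|m IHm].
  rewrite big_geq //; apply: opP => u v; rewrite ent1 ent_eunit.
  have none (x y : cfg) : agree (intv N 1 0) x y by apply/agreeP => j; rewrite /intv; lia.
  suff -> : agree (predC (intv N 1 0)) u v = (u == v) by rewrite !none.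
  apply/idP/idP => [uv | /eqP ->]; last exact: agree_refl.
  exact/eqP/(@agree_split (intv N 1 0)).
rewrite big_nat_recr //= IHm eunit_mul; last exact: intv_disj.
by apply: eunit_ext => j; rewrite /= /intv; apply/orP/idP => [[] | ?]; lia.
Qed.

Lemma tr_eunit_full (a b : cfg) Q : \tr (eu (intv N 1 N) a b *m Q) = ent Q b a.
Proof.
have full j : intv N 1 N j by rewrite /intv; have := ltn_ord j; lia.
have mix_full (x y : cfg) : mix (intv N 1 N) x y = x.
  by apply/ffunP => j; rewrite ffunE full.
have [agreeC agreeCC_full] : (forall x y : cfg, agree (predC (intv N 1 N)) x y) /\
    (forall x y : cfg, agree (predC (predC (intv N 1 N))) x y = (x == y)).
  split=> x y; first by apply/agreeP => j; rewrite /= (full j).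
  rewrite agreeCC; apply/idP/idP => [xy | /eqP ->]; last exact: agree_refl.
  apply/eqP/(@agree_split (intv N 1 N)) => //.
  by apply/agreeP => j; rewrite /= (full j).
change (\tr (eu (intv N 1 N) a b * Q) = ent Q b a).
rewrite tr_eunit_ptr ent_ptr agreeC mul1r mix_full.
rewrite (eq_bigl _ _ (fun u => agreeCC_full u b)) big_pred1_eq.
by congr (ent Q b _); apply/ffunP => j; rewrite ffunE /= full.
Qed.

(* The operators Y_k of the theorem computed by the backward recursion:
   sweep_from ... m is Y_{N-r-m}. *)
Fixpoint sweep_from (O : op) (l r : nat) (X : nat -> op) (F : nat -> op -> op)
    (m : nat) : op :=
  if m is m'.+1 then
    let k := (N - r - m')%N in
    F k (Emap O (intv N (k - l) (k - 1)) (X k * sweep_from O l r X F m'))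
  else \prod_((N - r).+1 <= i < N.+1) X i.

Definition sweep_seq O l r X F (k : nat) : op := sweep_from O l r X F (N - r - k).

Lemma sweep_seq_top O l r X F :
  sweep_seq O l r X F (N - r) = \prod_((N - r).+1 <= i < N.+1) X i.
Proof. by rewrite /sweep_seq subnn. Qed.

Lemma sweep_seq_rec O l r X F k : (1 <= k <= N - r)%N ->
  sweep_seq O l r X F (k - 1) =
  F k (Emap O (intv N (k - l) (k - 1)) (X k * sweep_seq O l r X F k)).
Proof.
move=> kr; rewrite /sweep_seq (_ : (N - r - (k - 1) = (N - r - k).+1)%N) /=; last by lia.
by rewrite (_ : (N - r - (N - r - k) = k)%N); last lia.
Qed.

(* An (l,r)-invertible operator is determined, among (l,r)-invertible ones, by
   its reductions to all blocks of l + r + 1 contiguous sites: evaluating the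
   sweep on one-site matrix units, with generalized inverses computed from O,
   gives every matrix element of O and of O' from the first block alone. *)
Lemma blocks_determine (l r : nat) (O O' : op) : (l + r <= N)%N ->
  lr_invertible O l r -> lr_invertible O' l r -> same_blocks (l + r + 1) O O' ->
  O' = O.
Proof.
move=> lr_le invO invO' blocks; apply: opP => b a.
pose X i := eu (intv N i i) a b.
pose F k := ginv_of O (intv N (k - l) (k - 1)) (intv N k (k + r - 1)).
pose Y := sweep_seq O l r X F.
have X_site i : (1 <= i <= N)%N -> X i \in V (intv N i i) by move=> _; apply: eunit_Vsp.
have F_ginv k : (l + 1 <= k <= N - r)%N ->
    ginv O (intv N (k - l) (k - 1)) (intv N k (k + r - 1)) (F k).
  by move=> _; apply: ginv_ofP.
have Y_rec k : (l + 1 <= k <= N - r)%N ->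
    Y (k - 1)%N = F k (Emap O (intv N (k - l) (k - 1)) (X k * Y k)).
  by move=> klr; apply: sweep_seq_rec; lia.
have Y_top := sweep_seq_top O l r X F.
have [F_ginv' Y_rec'] := sweep_transfer lr_le X_site F_ginv Y_top Y_rec blocks.
have first_block : \tr ((\prod_(1 <= i < l.+1) X i) * Y l *m O') =
    \tr ((\prod_(1 <= i < l.+1) X i) * Y l *m O).
  have /ptr_traceP block_tr := blocks 1%N ltac:(lia).
  apply: block_tr; apply: (@Vsp_mul (intv N 1 l) (intv N l.+1 (l + r))).
  - exact: intv_disj.
  - by apply: intvU_sub; lia.
  - by apply: prod_Vsp => i li; apply: X_site; lia.
  - exact: sweep_Vsp lr_le X_site F_ginv Y_top Y_rec l ltac:(lia).
rewrite -!tr_eunit_full -(prod_eunit a b N).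
rewrite (sweep_trace lr_le X_site F_ginv' Y_top Y_rec' invO') first_block.
by rewrite (sweep_trace lr_le X_site F_ginv Y_top Y_rec invO).
Qed.

End Operators.

Theorem theorem1 (C : numClosedFieldType) (N d l r : nat) (O : op C N d) :
  (4 <= N)%N -> (0 < l)%N -> (0 < r)%N -> (2 <= l + r <= N - 2)%N ->
  lr_invertible O l r ->
  (forall (X : nat -> op C N d) (Y : nat -> op C N d)
          (Ebar : nat -> op C N d -> op C N d),
     (forall i, (1 <= i <= N)%N -> X i \in Vsp C N d (intv N i i)) ->
     (forall k, (l + 1 <= k <= N - r)%N ->
        is_pinv O (intv N (k - l) (k - 1)) (intv N k (k + r - 1)) (Ebar k)) ->
     Y (N - r)%N = \prod_((N - r).+1 <= i < N.+1) X i ->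
     (forall k, (l + 1 <= k <= N - r)%N ->
        Y (k - 1)%N = Ebar k (Emap O (intv N (k - l) (k - 1)) (X k * Y k))) ->
     \tr ((\prod_(1 <= i < N.+1) X i) *m O) =
     \tr ((\prod_(1 <= i < l.+1) X i) * Y l *m O))
  /\
  (forall O' : op C N d, lr_invertible O' l r ->
     (forall k, (1 <= k <= N - (l + r + 1) + 1)%N ->
        ptr (predC (intv N k (k + (l + r + 1) - 1))) O' =
        ptr (predC (intv N k (k + (l + r + 1) - 1))) O) ->
     O' = O).
Proof.
move=> _ _ _ /andP [lr2 lrN] invO.
have lr_le : (l + r <= N)%N by lia.
split=> [X Y Ebar X_site Ebar_pinv Y_top Y_rec | O' invO' blocks].
  have F_ginv k klr := pinv_ginv (Ebar_pinv k klr).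
  exact: sweep_trace lr_le X_site F_ginv Y_top Y_rec invO.
exact: blocks_determine lr_le invO invO' blocks.
Qed.
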